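(* Let $G$ be a graph, $q\in\mathcal Q(G)$, $F$ a graph and $\varphi\in\mathsf{Hom}(F,G)$. For each $n\ge1$ let $T_n$ be the graph whose vertices are the pairs $(x,i)$ with $x\in V_G$ and $i$ a function from $\{A\subseteq V_G: x\in A\}$ to $\{0,1,2,\dots\}$ satisfying $i(A)<n^{q(A)}$ for all such $A$, with an edge from $(x,i)$ to $(y,j)$ iff $(x,y)\in E_G$ and $i(A)=j(A)$ for all $A$ with $\{x,y\}\subseteq A\subseteq V_G$. Let $\pi_n:T_n\to G$ be $\pi_n(x,i)=x$ and let $\hom_\varphi(F,T_n)$ be the number of homomorphisms $\psi:F\to T_n$ with $\pi_n\circ\psi=\varphi$. Then \[ \lim_{n\to\infty}\log_n\hom_\varphi(F,T_n)=\sum_{A\subseteq V_G} q(A)\cdot\mathsf{CC}\big(F|_{\varphi^{-1}(A)}\big). \]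
   Context: Graphs are finite directed graphs $G=(V_G,E_G)$ with $V_G$ nonempty finite and $E_G\subseteq V_G\times V_G$. Homomorphisms are vertex maps sending edges to edges; $\mathsf{Hom}(F,G)$ is their set. $F|_B$ is the induced subgraph on $B$ and $\mathsf{CC}$ the number of connected components ignoring edge directions, with $\mathsf{CC}(F|_\emptyset)=0$. $\mathcal Q(G)$ is the set of functions $q:\wp(V_G)\to\mathbb R$ with $q(\emptyset)=0$, $q(A)\ge0$ for all $A$, and $\sum_{A\subseteq V_G}q(A)\,\mathsf{CC}(G|_A)=1$. *)

From mathcomp Require Import all_boot.
From Stdlib Require Import Reals.
Set Implicit Arguments. Unset Strict Implicit. Unset Printing Implicit Defensive.

Definition is_hom (VF VG : finType) (EF : rel VF) (EG : rel VG) (f : VF -> VG) : Prop :=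
  forall u v, EF u v -> EG (f u) (f v).

Definition usym (V : finType) (E : rel V) (B : {set V}) : rel V :=
  fun x y => [&& x \in B, y \in B & E x y || E y x].

Definition CC (V : finType) (E : rel V) (B : {set V}) : nat :=
  n_comp (usym E B) B.

Notation "\rsum_ ( i : T ) F" := (\big[Rplus/0%R]_(i : T) F)
  (at level 41, F at level 41, i, T at level 50) : R_scope.

Definition in_Q (VG : finType) (EG : rel VG) (q : {set VG} -> R) : Prop :=
  q set0 = 0%R /\ (forall A, (0 <= q A)%R) /\
  (\rsum_(A : {set VG}) (q A * INR (CC EG A)))%R = 1%R.

Definition Rltb (a b : R) : bool := if Rlt_dec a b then true else false.

Section Tn.
Variables (VG : finType) (EG : rel VG) (q : {set VG} -> R).

Definition npow (n : nat) (A : {set VG}) : R := Rpower (INR n) (q A).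

(* A uniform natural bound: every admissible label i(A) < n^{q(A)} is < Mb n.+1. *)
Definition Mb (n : nat) : nat := \max_(A : {set VG}) Z.to_nat (up (npow n A)).

(* A label function i : {A | x \in A} -> nat is represented as a total function on
   {set VG} (with values in a sufficiently large 'I_k) normalized to 0 off the domain
   {A | x \in A}. *)
Definition Tlab (n : nat) := {ffun {set VG} -> 'I_(Mb n).+1}.

Definition Tvalid (n : nat) (p : VG * Tlab n) : bool :=
  [forall A : {set VG},
     if p.1 \in A then Rltb (INR (p.2 A)) (npow n A) else (p.2 A == 0 :> nat)].

Definition TV (n : nat) : finType := { p : VG * Tlab n | @Tvalid n p }.

Definition piT (n : nat) (a : TV n) : VG := (val a).1.

Definition ET (n : nat) : rel (TV n) := fun a b =>
  EG (val a).1 (val b).1 &&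
  [forall A : {set VG}, ((val a).1 \in A) && ((val b).1 \in A) ==>
      ((val a).2 A == (val b).2 A :> nat)].

Definition hom_phi (VF : finType) (EF : rel VF) (phi : VF -> VG) (n : nat) : nat :=
  #|[set psi : {ffun VF -> TV n} |
      [forall u, forall v, EF u v ==> ET (psi u) (psi v)] &&
      [forall u, piT (psi u) == phi u]]|.
End Tn.

From HB Require Import structures.
From mathcomp Require Import all_boot.
From Stdlib Require Import Reals Lra Lia.
Set Implicit Arguments. Unset Strict Implicit. Unset Printing Implicit Defensive.

(* A lift psi of phi to T_n is determined by its labels, and two vertices u, v
   joined by an edge of F inside phi^-1(A) carry the same label at A.  So a lift
   is the same thing as a free choice, for every A and every component of
   F|phi^-1(A), of one label below n^q(A), and
     hom_phi(F, T_n) = prod_A c_A ^ CC(F|phi^-1(A))   with  n^q(A) <= c_A <= n^q(A) + 1.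
   Taking logarithms, ln hom_phi(F, T_n) = S ln n + O(1) with S the claimed limit. *)

HB.instance Definition _ := Monoid.isComLaw.Build R 0%R Rplus
  (fun x y z => esym (Rplus_assoc x y z)) Rplus_comm Rplus_0_l.
HB.instance Definition _ := Monoid.isMulLaw.Build R 0%R Rmult Rmult_0_l Rmult_0_r.
HB.instance Definition _ := Monoid.isAddLaw.Build R Rmult Rplus
  Rmult_plus_distr_r Rmult_plus_distr_l.

Section UndirectedComponents.
Variables (V : finType) (E : rel V) (B : {set V}).

Lemma connect_sym_usym : connect_sym (usym E B).
Proof.
by apply: sym_connect_sym => x y; rewrite /usym andbCA (orbC (E x y)).
Qed.

Lemma connect_usym_mem u v : connect (usym E B) u v -> u \in B -> v \in B.
Proof.
move=> /connectP [p + ->]; elim: p u => //= w p IH u /andP [uw wp] _.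
by apply: IH wp _; case/and3P: uw.
Qed.

Lemma root_usym_mem u : u \in B -> root (usym E B) u \in B.
Proof. exact/connect_usym_mem/connect_root. Qed.

Lemma CC_roots : CC E B = #|[pred u | (u \in B) && (root (usym E B) u == u)]|.
Proof. by apply: eq_card => u; rewrite !inE andbC. Qed.

End UndirectedComponents.

Section LiftCount.
Variables (VG : finType) (EG : rel VG) (q : {set VG} -> R)
  (VF : finType) (EF : rel VF) (phi : VF -> VG) (n : nat).
Hypothesis hphi : is_hom EF EG phi.

Local Notation Lab := 'I_(Mb q n).+1.
Implicit Types (A : {set VG}) (u v : VF) (psi : {ffun VF -> TV q n})
  (g : {ffun {set VG} * VF -> Lab}).

Definition preim_phi (A : {set VG}) : {set VF} := [set u | phi u \in A].

Local Notation adj A := (usym EF (preim_phi A)).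

Definition is_comp_root A u := (u \in preim_phi A) && (root (adj A) u == u).

Definition admissible A : pred Lab := [pred k : Lab | Rltb (INR k) (npow q n A)].

Definition lifts := [set psi : {ffun VF -> TV q n} |
  [forall u, forall v, EF u v ==> ET EG (psi u) (psi v)] &&
  [forall u, piT (psi u) == phi u]].

(* Normalized to [ord0] off the component roots, so that a labeling of the
   roots is a finite function on all of {set VG} * VF. *)
Definition label_range (p : {set VG} * VF) : pred Lab :=
  if is_comp_root p.1 p.2 then admissible p.1 else pred1 ord0.

Definition root_labelings :=
  [set g : {ffun {set VG} * VF -> Lab} | [forall p, g p \in label_range p]].

Definition root_labels (psi : {ffun VF -> TV q n}) : {ffun {set VG} * VF -> Lab} :=
  [ffun p => if is_comp_root p.1 p.2 then (val (psi p.2)).2 p.1 else ord0].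

Definition labels_from_roots (g : {ffun {set VG} * VF -> Lab}) (u : VF) : Tlab q n :=
  [ffun A : {set VG} => if phi u \in A then g (A, root (adj A) u) else ord0].

Lemma lift_vertex psi u : psi \in lifts -> (val (psi u)).1 = phi u.
Proof. by rewrite inE => /andP [_ /forallP /(_ u) /eqP]. Qed.

Lemma lift_label_out psi u A :
  psi \in lifts -> phi u \notin A -> (val (psi u)).2 A = ord0.
Proof.
move=> psiL uA; apply: val_inj.
move: (valP (psi u)) => /forallP /(_ A).
by rewrite (lift_vertex u psiL) (negbTE uA) => /eqP.
Qed.

Lemma lift_label_edge psi A u v : psi \in lifts ->
  phi u \in A -> phi v \in A -> EF u v -> (val (psi u)).2 A = (val (psi v)).2 A.
Proof.
move=> psiL uA vA Euv; move: (psiL); rewrite inE => /andP [/forallP hom _].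
move: (hom u) => /forallP /(_ v) /implyP /(_ Euv) /andP [_ /forallP /(_ A)].
by rewrite (lift_vertex u psiL) (lift_vertex v psiL) uA vA => /eqP /val_inj.
Qed.

Lemma lift_label_connect psi A u v : psi \in lifts ->
  connect (adj A) u v -> (val (psi u)).2 A = (val (psi v)).2 A.
Proof.
move=> psiL /connectP [p + ->]; elim: p u => //= w p IH u /andP [uw wp].
rewrite -IH //; case/and3P: uw; rewrite !inE => uA wA /orP [] uw.
  exact: lift_label_edge.
exact/esym/lift_label_edge.
Qed.

Lemma is_comp_root_root A u : phi u \in A -> is_comp_root A (root (adj A) u).
Proof.
move=> uA; rewrite /is_comp_root root_root ?eqxx ?andbT; last exact: connect_sym_usym.
by apply: root_usym_mem; rewrite inE.
Qed.

Lemma root_labels_inj : {in lifts &, injective root_labels}.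
Proof.
move=> psi1 psi2 psi1L psi2L same; apply/ffunP => u; apply: val_inj.
apply: injective_projections; first by rewrite !lift_vertex.
apply/ffunP => A; have [uA | uA] := boolP (phi u \in A); last by rewrite !lift_label_out.
have u_root : connect (adj A) u (root (adj A) u) by apply: connect_root.
rewrite (lift_label_connect psi1L u_root) (lift_label_connect psi2L u_root).
by move/ffunP/(_ (A, root (adj A) u)): same; rewrite !ffunE /= is_comp_root_root // => ->.
Qed.

Lemma root_labels_mem psi : psi \in lifts -> root_labels psi \in root_labelings.
Proof.
move=> psiL; rewrite inE; apply/forallP => -[A u]; rewrite ffunE /label_range /=.
case: ifP => // /andP [+ _]; rewrite inE => uA.
by move: (valP (psi u)) => /forallP /(_ A); rewrite (lift_vertex u psiL) uA.
Qed.

Lemma labels_from_roots_valid g u :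
  g \in root_labelings -> Tvalid (phi u, labels_from_roots g u).
Proof.
rewrite inE => /forallP gR; apply/forallP => A /=; rewrite ffunE.
case: ifP => uA; rewrite uA //; move: (gR (A, root (adj A) u)).
by rewrite /label_range is_comp_root_root.
Qed.

Lemma root_labelings_sub : root_labelings \subset root_labels @: lifts.
Proof.
apply/subsetP => g gR.
pose psi := [ffun u => (Sub (phi u, labels_from_roots g u)
                          (labels_from_roots_valid u gR) : TV q n)].
apply/imsetP; exists psi.
  rewrite inE; apply/andP; split; last by apply/forallP => u; rewrite ffunE.
  apply/forallP => u; apply/forallP => v; apply/implyP => Euv.
  rewrite !ffunE /ET /= hphi //=; apply/forallP => A; apply/implyP => /andP [uA vA].
  rewrite !ffunE uA vA; apply/eqP; congr (nat_of_ord (g (A, _))); apply/eqP.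
  rewrite root_connect; last exact: connect_sym_usym.
  by apply: connect1; rewrite /usym !inE uA vA Euv.
apply/ffunP => -[A u]; rewrite !ffunE /=.
move: (gR); rewrite inE => /forallP /(_ (A, u)); rewrite /label_range /=.
case: ifP => [/andP [+ /eqP uroot] _ | _ /eqP -> //].
by rewrite inE => ->; rewrite uroot.
Qed.

Lemma card_lifts : #|lifts| = #|root_labelings|.
Proof.
rewrite -(card_in_imset root_labels_inj); apply: eq_card => g.
apply/imsetP/idP => [[psi psiL ->] | gR]; first exact: root_labels_mem.
exact/imsetP/(subsetP root_labelings_sub).
Qed.

Lemma card_root_labelings :
  #|root_labelings| = (\prod_A expn #|admissible A| (CC EF (preim_phi A)))%nat.
Proof.
have -> : #|root_labelings| = #|family_mem (fun p => mem (label_range p))|.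
  by apply: eq_card => g; rewrite inE; apply/forallP/familyP.
rewrite card_family foldrE big_map big_enum /=.
rewrite -(pair_big xpredT xpredT (fun A u => #|label_range (A, u)|)) /=.
apply: eq_bigr => A _.
rewrite (eq_bigr (fun u => if is_comp_root A u then #|admissible A| else 1%nat)); last first.
  by move=> u _; rewrite /label_range /=; case: ifP => _; rewrite ?card1.
rewrite -big_mkcond prod_nat_const CC_roots.
by apply: congr1; apply: eq_card => u; rewrite !inE.
Qed.

Lemma hom_phi_prod :
  hom_phi EG q EF phi n = (\prod_A expn #|admissible A| (CC EF (preim_phi A)))%nat.
Proof. by rewrite -card_root_labelings -card_lifts. Qed.

End LiftCount.

Arguments admissible {VG} q n A.

Lemma RltbP a b : reflect (a < b)%R (Rltb a b).
Proof. by rewrite /Rltb; case: Rlt_dec => ab; constructor. Qed.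

Lemma ltn_up (x : R) k : (INR k < x)%R -> k < Z.to_nat (up x).
Proof.
move=> kx; have [x_up _] := archimed x.
have : (IZR (Z.of_nat k) < IZR (up x))%R by rewrite -INR_IZR_INZ; lra.
by move/lt_IZR => ?; apply/ltP; lia.
Qed.

Lemma INR_up_le (x : R) : (0 <= x)%R -> (INR (Z.to_nat (up x)) <= x + 1)%R.
Proof.
move=> x_ge0; have [x_up up_x] := archimed x.
have : (IZR 0 < IZR (up x))%R by rewrite /=; lra.
by move/lt_IZR => ?; rewrite INR_IZR_INZ Znat.Z2Nat.id; [lra | lia].
Qed.

Lemma card_ord_ltR_bounds (M : nat) (x : R) :
  (0 <= x)%R -> Z.to_nat (up x) <= M.+1 ->
  (x <= INR #|[pred k : 'I_M.+1 | Rltb (INR k) x]| <= x + 1)%R.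
Proof.
set P := [pred k : 'I_M.+1 | _] => x_ge0 upM; split.
- apply: Rnot_lt_le => Px; suff : #|P|.+1 <= #|P| by rewrite ltnn.
  rewrite [X in _ <= X]cardE -(size_map val) -(size_iota 0 #|P|.+1).
  apply: uniq_leq_size (iota_uniq _ _) _ => y; rewrite mem_iota add0n /= => yP.
  have yx : (INR y < x)%R by apply: Rle_lt_trans Px; apply/le_INR/leP; rewrite -ltnS.
  have yM : y < M.+1 by apply: leq_trans (ltn_up yx) upM.
  by apply/mapP; exists (Ordinal yM); rewrite // mem_enum inE /=; apply/RltbP.
- apply: Rle_trans (INR_up_le x_ge0); apply/le_INR/leP.
  rewrite cardE -(size_map val) -(size_iota 0 (Z.to_nat (up x))).
  apply: uniq_leq_size; first by rewrite map_inj_uniq ?enum_uniq //; apply: val_inj.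
  move=> y /mapP [k]; rewrite mem_enum inE => /RltbP kx ->.
  by rewrite mem_iota add0n ltn_up.
Qed.

Lemma ln_le_compat x y : (0 < x)%R -> (x <= y)%R -> (ln x <= ln y)%R.
Proof.
move=> x_gt0 /Rle_lt_or_eq_dec [xy | <-]; last exact: Rle_refl.
exact/Rlt_le/ln_increasing.
Qed.

Lemma ln_prod_expn (I : finType) (c k : I -> nat) : (forall i, 0 < c i) ->
  ln (INR (\prod_i expn (c i) (k i))) = (\rsum_(i : I) (INR (k i) * ln (INR (c i))))%R.
Proof.
move=> c_gt0; suff [] : 0 < \prod_i expn (c i) (k i) /\
    ln (INR (\prod_i expn (c i) (k i))) = (\rsum_(i : I) (INR (k i) * ln (INR (c i))))%R by [].
apply: (big_ind2 (fun (h : nat) (s : R) => 0 < h /\ ln (INR h) = s)).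
- by rewrite ln_1.
- move=> h1 s1 h2 s2 [h1_gt0 <-] [h2_gt0 <-]; rewrite muln_gt0 h1_gt0.
  by rewrite -multE mult_INR ln_mult //; apply/lt_0_INR/ltP.
- move=> i _; rewrite expn_gt0 c_gt0; split=> //.
  have -> : expn (c i) (k i) = Nat.pow (c i) (k i) by elim: (k i) => // j IH; rewrite expnS IH.
  by rewrite pow_INR ln_pow //; apply/lt_0_INR/ltP.
Qed.

Lemma rsum_le (I : finType) (F G : I -> R) :
  (forall i, F i <= G i)%R -> (\rsum_(i : I) F i <= \rsum_(i : I) G i)%R.
Proof.
move=> FG; apply: (big_ind2 (fun a b => a <= b)%R) => [|*|i _].
- exact: Rle_refl.
- exact: Rplus_le_compat.
- exact: FG.
Qed.

Section LogBounds.
Local Open Scope R_scope.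
Variables (VG : finType) (EG : rel VG) (q : {set VG} -> R)
  (VF : finType) (EF : rel VF) (phi : VF -> VG) (m : nat).
Hypotheses (hphi : is_hom EF EG phi) (q_ge0 : forall A, 0 <= q A) (m_gt1 : (1 < m)%nat).

Let L := ln (INR m).

Lemma ln_m_gt0 : 0 < L.
Proof.
rewrite /L -ln_1; apply: ln_increasing; first lra.
by apply: (lt_INR 1); apply/ltP.
Qed.

Lemma ln_npow A : ln (npow q m A) = q A * L.
Proof. exact: ln_exp. Qed.

Lemma npow_ge1 A : 1 <= npow q m A.
Proof.
have := Rmult_le_pos _ _ (q_ge0 A) (Rlt_le _ _ ln_m_gt0).
have := exp_ineq1_le (q A * L); rewrite /npow /Rpower /L; lra.
Qed.

Lemma card_admissible_bounds A :
  npow q m A <= INR #|admissible q m A| <= npow q m A + 1.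
Proof.
apply: card_ord_ltR_bounds; first by have := npow_ge1 A; lra.
apply: leq_trans _ (leqnSn _).
rewrite /Mb; exact: (@leq_bigmax _ (fun B : {set VG} => Z.to_nat (up (npow q m B))) A).
Qed.

Lemma card_admissible_gt0 A : (0 < #|admissible q m A|)%nat.
Proof.
have [lo _] := card_admissible_bounds A; have := npow_ge1 A.
by move=> ?; apply/ltP/INR_lt; rewrite /=; lra.
Qed.

(* The upper bound uses [x + 1 <= 2 x] for [x = m ^ q A >= 1]. *)
Lemma ln_card_admissible_bounds A :
  q A * L <= ln (INR #|admissible q m A|) <= q A * L + ln 2.
Proof.
have [lo hi] := card_admissible_bounds A; have := npow_ge1 A.
rewrite -ln_npow => x_ge1; split.
  by apply: ln_le_compat; lra.
rewrite Rplus_comm -ln_mult; try lra.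
by apply: ln_le_compat; [apply/lt_0_INR/ltP/card_admissible_gt0 | lra].
Qed.

Lemma ln_hom_phi_bounds :
  let S := \rsum_(A : {set VG}) (q A * INR (CC EF (preim_phi phi A))) in
  let K := \rsum_(A : {set VG}) INR (CC EF (preim_phi phi A)) in
  S * L <= ln (INR (hom_phi EG q EF phi m)) <= S * L + K * ln 2.
Proof.
move=> S K; rewrite (hom_phi_prod _ _ hphi) ln_prod_expn; last exact: card_admissible_gt0.
rewrite /S /K !big_distrl -big_split /=.
split; apply: rsum_le => A; have [lo hi] := ln_card_admissible_bounds A;
  have k_ge0 := pos_INR (CC EF (preim_phi phi A)).
- by have := Rmult_le_compat_l _ _ _ k_ge0 lo; lra.
- by have := Rmult_le_compat_l _ _ _ k_ge0 hi; lra.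
Qed.

End LogBounds.

Lemma cv_infty_ln_INR : cv_infty (fun n => ln (INR n.+2)).
Proof.
move=> M; have [N /Rlt_le NM] := INR_unbounded (exp M); exists N => n Nn.
rewrite -[M]ln_exp; apply: ln_increasing; first exact: exp_pos.
by apply: Rle_lt_trans NM _; apply: lt_INR; lia.
Qed.

Lemma Un_cv_div_sandwich (a L : nat -> R) (S C : R) : cv_infty L ->
  (forall n, S * L n <= a n <= S * L n + C)%R -> Un_cv (fun n => a n / L n)%R S.
Proof.
move=> L_infty aL eps eps_gt0; have [N NL] := L_infty (Rabs C / eps)%R.
exists N => n /NL CL; have [lo hi] := aL n.
have L_gt0 : (0 < L n)%R.
  apply: Rle_lt_trans CL; apply: Rmult_le_pos; first exact: Rabs_pos.
  exact/Rlt_le/Rinv_0_lt_compat.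
have Ceps : (Rabs C < eps * L n)%R.
  have := Rmult_lt_compat_l _ _ _ eps_gt0 CL.
  by rewrite (_ : eps * (Rabs C / eps) = Rabs C)%R //; field; lra.
rewrite /R_dist (_ : a n / L n - S = (a n - S * L n) / L n)%R; last by field; lra.
rewrite Rabs_pos_eq; last by apply: Rmult_le_pos; [lra | exact/Rlt_le/Rinv_0_lt_compat].
apply: (Rmult_lt_reg_r (L n)) => //; rewrite /Rdiv Rmult_assoc Rinv_l; last lra.
by have := Rle_abs C; lra.
Qed.

Theorem lemma6p1
  (VG : finType) (EG : rel VG) (hVG : 0 < #|VG|)
  (q : {set VG} -> R) (hq : in_Q EG q)
  (VF : finType) (EF : rel VF) (hVF : 0 < #|VF|)
  (phi : VF -> VG) (hphi : is_hom EF EG phi) :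
  Un_cv
    (fun n => (ln (INR (hom_phi EG q EF phi n.+2)) / ln (INR n.+2))%R)
    (\rsum_(A : {set VG}) (q A * INR (CC EF [set u | phi u \in A])))%R.
Proof.
have [_ [q_ge0 _]] := hq.
apply: Un_cv_div_sandwich cv_infty_ln_INR _ => n.
exact: (ln_hom_phi_bounds hphi q_ge0 (isT : 1 < n.+2)).
Qed.
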